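(* Let $c\in Z^1(G,M(\mathbb{A})^\times)$ be continuous. (i) If $c^{-1}:r\mapsto c(r)^{-1}$ is also continuous, then for every $a\in\mathbb{A}$ the map $r\in G\mapsto\alpha_r(a)\,c(r)\in M(\mathbb{A})$ is continuous. (ii) The same conclusion holds for any continuous $c\in Z^1(G,Z(M(\mathbb{A}))^\times)$.
   Context: $\mathbb{A}$ is a $C^*$-algebra, $M(\mathbb{A})$ its multiplier algebra with the strict topology (all continuity statements are for this topology), $M(\mathbb{A})^\times$ its invertible elements, $Z(M(\mathbb{A}))^\times$ the invertible central multipliers. $(\mathbb{A},G,\alpha)$ is a $C^*$-dynamical system ($G$ second-countable locally compact, $\alpha:G\to\mathrm{Aut}(\mathbb{A})$ with $r\mapsto\alpha_r(a)$ norm-continuous), extended to $M(\mathbb{A})$. For a subgroup $X\subset M(\mathbb{A})^\times$, $Z^1(G,X)$ is the set of maps $c:G\to X$ with $c(rr')=c(r)\alpha_r[c(r')]$ for all $r,r'$. *)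

From HB Require Import structures.
From mathcomp Require Import all_boot all_order all_algebra.
From mathcomp Require Import all_classical all_reals all_analysis.
From mathcomp Require Import complex.
Set Implicit Arguments. Unset Strict Implicit. Unset Printing Implicit Defensive.
Import Order.TTheory GRing.Theory Num.Theory.
Import numFieldNormedType.Exports.
Local Open Scope ring_scope.

Definition is_Cstar_algebra (C : numClosedFieldType)
    (A : completeNormedModType C) (mul : A -> A -> A) (star : A -> A) : Prop :=
  ((forall a b c, mul (mul a b) c = mul a (mul b c)) /\ (forall (k : C) a b c, mul (k *: a + b) c = k *: mul a c + mul b c) /\ (forall (k : C) a b c, mul a (k *: b + c) = k *: mul a b + mul a c) /\ (forall a b, `|mul a b| <= `|a| * `|b|) /\ (forall (k : C) a b, star (k *: a + b) = k^* *: star a + star b) /\ (forall a, star (star a) = a) /\ (forall a b, star (mul a b) = mul (star b) (star a)) /\ (forall a, `|mul (star a) a| = `|a| ^+ 2)).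

Definition is_star_automorphism (C : numClosedFieldType)
    (A : completeNormedModType C) (mul : A -> A -> A) (star : A -> A)
    (f : A -> A) : Prop :=
  ((forall (k : C) a b, f (k *: a + b) = k *: f a + f b) /\ (forall a b, f (mul a b) = mul (f a) (f b)) /\ (forall a, f (star a) = star (f a)) /\ bijective f).

(* A multiplier m is a pair (L, R) of maps A -> A with  x L(y) = R(x) y;
   m acts by  m a := L a  and  a m := R a. *)
Definition multiplier (A : Type) := ((A -> A) * (A -> A))%type.

Definition is_multiplier (A : Type) (mul : A -> A -> A) (m : multiplier A) :=
  forall x y, mul x (m.1 y) = mul (m.2 x) y.

Definition mult_mul (A : Type) (m n : multiplier A) : multiplier A :=
  (m.1 \o n.1, n.2 \o m.2).
Definition mult_one (A : Type) : multiplier A := (id, id).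
Definition mult_eq (A : Type) (m n : multiplier A) : Prop :=
  m.1 =1 n.1 /\ m.2 =1 n.2.

Definition mult_of (A : Type) (mul : A -> A -> A) (a : A) : multiplier A :=
  (mul a, fun x => mul x a).

Definition mult_inverse (A : Type) (mul : A -> A -> A) (m n : multiplier A) :=
  is_multiplier mul n /\
  mult_eq (mult_mul m n) (mult_one A) /\ mult_eq (mult_mul n m) (mult_one A).
Definition mult_invertible (A : Type) (mul : A -> A -> A) (m : multiplier A) :=
  is_multiplier mul m /\ exists n, mult_inverse mul m n.

Definition mult_central (A : Type) (mul : A -> A -> A) (m : multiplier A) :=
  is_multiplier mul m /\
  forall n, is_multiplier mul n -> mult_eq (mult_mul m n) (mult_mul n m).

(* strict continuity of a map into M(A): the strict topology is the initial
   topology for the maps m |-> m a and m |-> a m (a in A), so f is strictly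
   continuous iff all r |-> f(r) a and r |-> a f(r) are norm-continuous. *)
Definition strictly_continuous (T : topologicalType) (C : numClosedFieldType)
    (A : completeNormedModType C) (f : T -> multiplier A) : Prop :=
  forall a, continuous (fun r => (f r).1 a) /\ continuous (fun r => (f r).2 a).

Definition is_lc_group (G : topologicalType)
    (gmul : G -> G -> G) (gone : G) (ginv : G -> G) : Prop :=
  ((forall x y z, gmul (gmul x y) z = gmul x (gmul y z)) /\ (forall x, gmul gone x = x /\ gmul x gone = x) /\ (forall x, gmul (ginv x) x = gone /\ gmul x (ginv x) = gone) /\ continuous (fun p : G * G => gmul p.1 p.2) /\ continuous ginv /\ hausdorff_space G /\ locally_compact [set: G] /\ second_countable (T := G)).

Definition is_Cstar_dynamical_system (G : topologicalType)
    (gmul : G -> G -> G) (gone : G) (ginv : G -> G)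
    (C : numClosedFieldType) (A : completeNormedModType C)
    (mul : A -> A -> A) (star : A -> A) (alpha : G -> A -> A) : Prop :=
  (is_lc_group gmul gone ginv /\ is_Cstar_algebra mul star /\ (forall r, is_star_automorphism mul star (alpha r)) /\ (forall r s a, alpha (gmul r s) a = alpha r (alpha s a)) /\ (forall a, alpha gone a = a) /\ (forall a, continuous (fun r => alpha r a))).

Definition alpha_mult (G : Type) (ginv : G -> G) (A : Type)
    (alpha : G -> A -> A) (r : G) (m : multiplier A) : multiplier A :=
  (alpha r \o m.1 \o alpha (ginv r), alpha r \o m.2 \o alpha (ginv r)).

Definition is_cocycle (G : Type) (gmul : G -> G -> G) (ginv : G -> G)
    (A : Type) (alpha : G -> A -> A) (X : multiplier A -> Prop)
    (c : G -> multiplier A) : Prop :=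
  (forall r, X (c r)) /\
  forall r r', mult_eq (c (gmul r r')) (mult_mul (c r) (alpha_mult ginv alpha r (c r'))).

(* The left action of alpha_r(a) c(r) on b is alpha_r(a) (c(r) b), a product of
   continuous maps.  For the right action b alpha_r(a) c(r): if c is central it is
   (b c(r)) alpha_r(a); in general the cocycle identity gives
   alpha_r(a) c(r) = alpha_r(a c(r^-1)^-1), and r |-> alpha_r(x r) is continuous
   for continuous x because *-automorphisms are contractive.
   Contractivity of a *-homomorphism phi of a possibly non-unital C*-algebra
   avoids spectral theory: for self-adjoint k with |k| < 1, a Picard iteration
   yields w in A playing the role of 1 - sqrt(1 - k^2); then
   c = phi(k) (1 - phi(w)) satisfies c^2 = x - x^2 for x = phi(k)^2, and
   |x|^2 <= |x^2 + c^2| = |x| for the commuting self-adjoint pair x, c. *)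

From HB Require Import structures.
From mathcomp Require Import all_boot all_order all_algebra.
From mathcomp Require Import all_classical all_reals all_analysis.
From mathcomp Require Import complex ring.
Import Order.TTheory GRing.Theory Num.Theory.
Import numFieldNormedType.Exports.
Local Open Scope ring_scope.
Local Open Scope complex_scope.
Local Open Scope classical_set_scope.
Set Implicit Arguments. Unset Strict Implicit.

Section Contraction.
Variable R : realType.

Lemma exists_expr_lt (s e : R[i]) : 0 <= s -> s < 1 -> 0 < e ->
  exists N : nat, s ^+ N < e.
Proof.
move=> s0 s1 e0.
have [sr er] := (ger0_real s0, gtr0_real e0).
rewrite -(RRe_real sr) -(RRe_real er) in s0 s1 e0 *.
rewrite ler0c in s0; rewrite ltcR in s1; rewrite (ltcR 0) in e0.
have geo : @geometric R 1%R (complex.Re s) @ \oo --> (0 : R^o).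
  by apply: cvg_geometric; rewrite ger0_norm.
have [N _ HN] := @cvgr0_norm_lt _ _ _ _ _ _ geo _ e0.
exists N; have := HN N (leqnn N).
by rewrite /geometric /= mul1r ger0_norm ?exprn_ge0 // -rmorphXn ltcR.
Qed.

Lemma cvgn_iter_contraction (V : completeNormedModType R[i]) (P : V -> Prop)
    (f : V -> V) (s : R[i]) x0 :
  0 <= s -> s < 1 -> P x0 -> (forall x, P x -> P (f x)) ->
  (forall x y, P x -> P y -> `|f x - f y| <= s * `|x - y|) ->
  cvgn (fun n => iter n f x0).
Proof.
move=> s0 s1 Px0 Pf f_lip; set y := fun n => iter n f x0.
set d := `|y 1%N - y 0%N|.
have Py n : P (y n) by elim: n => //= n; apply: Pf.
have s1' : 0 < 1 - s by rewrite subr_gt0.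
have step n : `|y n.+1 - y n| <= s ^+ n * d.
  elim: n => [|n IH]; first by rewrite mul1r.
  apply: le_trans (f_lip _ _ (Py n.+1) (Py n)) _.
  by rewrite exprS -mulrA ler_wpM2l.
have tail n m : `|y n - y (n + m)%N| * (1 - s) <= s ^+ n * d * (1 - s ^+ m).
  elim: m => [|m IH]; first by rewrite addn0 subrr normr0 !mul0r expr0 subrr mulr0.
  have -> : y n - y (n + m.+1)%N = (y n - y (n + m)%N) + (y (n + m)%N - y (n + m).+1).
    by rewrite addnS addrA subrK.
  apply: le_trans (_ : (`|y n - y (n + m)%N| + s ^+ (n + m) * d) * (1 - s) <= _).
    apply: ler_wpM2r; first exact: ltW.
    apply: le_trans (ler_normD _ _) _.
    by apply: lerD => //; rewrite distrC step.
  rewrite mulrDl; apply: le_trans (lerD IH (lexx _)) _.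
  by rewrite exprD exprSr le_eqVlt; apply/orP; left; apply/eqP; ring.
have d0 : 0 <= d := normr_ge0 _.
have d1 : 0 < d + 1 by rewrite ltr_wpDl.
apply/cauchy_cvgP; apply: cauchy_exP => e e0.
have e' : 0 < e * (1 - s) / (d + 1) by rewrite divr_gt0 ?mulr_gt0.
have [N HN] := exists_expr_lt s0 s1 e'.
exists (y N); exists N => // n /= Nn.
rewrite -ball_normE /ball_ /= -(subnKC Nn) -(ltr_pM2r s1').
apply: le_lt_trans (tail N (n - N)%N) _.
have sN0 : 0 <= s ^+ N by exact: exprn_ge0.
apply: le_lt_trans (_ : s ^+ N * (d + 1) < _); last by rewrite -ltr_pdivlMr.
rewrite -mulrA ler_wpM2l // -[leRHS]mulr1 ler_pM ?lerDl //.
  by rewrite subr_ge0 exprn_ile1 // ltW.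
by rewrite lerBlDr lerDl exprn_ge0.
Qed.

End Contraction.

Section CstarAlgebra.
Variables (R : realType) (A : completeNormedModType R[i]).
Variables (mul : A -> A -> A) (star : A -> A).
Hypothesis HA : is_Cstar_algebra mul star.

Lemma cmulA a b c : mul (mul a b) c = mul a (mul b c).
Proof. by case: HA. Qed.

Lemma cmulDZl k a b c : mul (k *: a + b) c = k *: mul a c + mul b c.
Proof. by case: HA => _ []. Qed.

Lemma cmulDZr k a b c : mul a (k *: b + c) = k *: mul a b + mul a c.
Proof. by case: HA => _ [_ []]. Qed.

Lemma norm_cmul_le a b : `|mul a b| <= `|a| * `|b|.
Proof. by case: HA => _ [_ [_ []]]. Qed.

Lemma cstarDZ (k : R[i]) a b : star (k *: a + b) = k^* *: star a + star b.
Proof. by case: HA => _ [_ [_ [_ []]]]. Qed.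

Lemma cstarK a : star (star a) = a.
Proof. by case: HA => _ [_ [_ [_ [_ []]]]]. Qed.

Lemma cstar_mul a b : star (mul a b) = mul (star b) (star a).
Proof. by case: HA => _ [_ [_ [_ [_ [_ []]]]]]. Qed.

Lemma cstar_identity a : `|mul (star a) a| = `|a| ^+ 2.
Proof. by case: HA => _ [_ [_ [_ [_ [_ []]]]]]. Qed.

Lemma cmulDl a b c : mul (a + b) c = mul a c + mul b c.
Proof. by rewrite -[a]scale1r cmulDZl !scale1r. Qed.

Lemma cmulDr a b c : mul a (b + c) = mul a b + mul a c.
Proof. by rewrite -[b]scale1r cmulDZr !scale1r. Qed.

Lemma cmul0l c : mul 0 c = 0.
Proof. by apply: (addrI (mul 0 c)); rewrite -cmulDl !addr0. Qed.

Lemma cmul0r c : mul c 0 = 0.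
Proof. by apply: (addrI (mul c 0)); rewrite -cmulDr !addr0. Qed.

Lemma cmulZl k a c : mul (k *: a) c = k *: mul a c.
Proof. by rewrite -[k *: a]addr0 cmulDZl cmul0l addr0. Qed.

Lemma cmulZr k a c : mul a (k *: c) = k *: mul a c.
Proof. by rewrite -[k *: c]addr0 cmulDZr cmul0r addr0. Qed.

Lemma cmulBl a b c : mul (a - b) c = mul a c - mul b c.
Proof. by rewrite cmulDl -scaleN1r cmulZl scaleN1r. Qed.

Lemma cmulBr a b c : mul a (b - c) = mul a b - mul a c.
Proof. by rewrite cmulDr -scaleN1r cmulZr scaleN1r. Qed.

Lemma cstarD a b : star (a + b) = star a + star b.
Proof. by rewrite -[a]scale1r cstarDZ conjC1 !scale1r. Qed.

Lemma cstar0 : star 0 = 0.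
Proof. by apply: (addrI (star 0)); rewrite -cstarD !addr0. Qed.

Lemma cstarZ k a : star (k *: a) = k^* *: star a.
Proof. by rewrite -[k *: a]addr0 cstarDZ cstar0 addr0. Qed.

Lemma cstarB a b : star (a - b) = star a - star b.
Proof. by rewrite cstarD -scaleN1r cstarZ rmorphN1 scaleN1r. Qed.

Lemma cmul_comm_mul z a b : mul z a = mul a z -> mul z b = mul b z ->
  mul z (mul a b) = mul (mul a b) z.
Proof. by move=> za zb; rewrite -cmulA za cmulA zb cmulA. Qed.

Lemma norm_cstar a : `|star a| = `|a|.
Proof.
suff le_star b : `|b| <= `|star b|.
  by apply/le_anti; rewrite le_star -{2}(cstarK a) le_star.
have [->|b0] := eqVneq b 0; first by rewrite normr0.
rewrite -(ler_pM2r (_ : 0 < `|b|)) ?normr_gt0 // -expr2 -cstar_identity; exact: norm_cmul_le.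
Qed.

Lemma annihilator_eq0 d : (forall w, mul d w = 0) -> d = 0.
Proof.
move=> dA; have : `|star d| ^+ 2 = 0 by rewrite -cstar_identity cstarK dA normr0.
move/eqP; rewrite expf_eq0 /= normr_eq0 => /eqP.
by rewrite -{2}(cstarK d) => ->; rewrite cstar0.
Qed.

Lemma mult_of_multiplier a : is_multiplier mul (mult_of mul a).
Proof. by move=> x y; rewrite /mult_of /= cmulA. Qed.

Lemma mult_right_mul (m : multiplier A) x y : is_multiplier mul m ->
  m.2 (mul x y) = mul x (m.2 y).
Proof.
move=> Hm; apply/eqP; rewrite -subr_eq0; apply/eqP; apply: annihilator_eq0 => w.
by rewrite cmulBl -Hm cmulA Hm -cmulA subrr.
Qed.

Lemma cvg_cmul {T : Type} {F : set_system T} {FF : Filter F} (f g : T -> A) x y :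
  f @ F --> x -> g @ F --> y -> (fun t => mul (f t) (g t)) @ F --> mul x y.
Proof.
move=> fx gy.
have dist_cvg0 (h : T -> A) z : h @ F --> z -> (fun t => `|h t - z|) @ F --> (0 : R[i]^o).
  by move=> hz; have := cvg_norm ((@subr_cvg0 _ _ _ F FF h z).2 hz); rewrite normr0; apply.
have fx0 := dist_cvg0 _ _ fx; have gy0 := dist_cvg0 _ _ gy.
have bound0 : (fun t => `|f t - x| * `|g t - y| + `|f t - x| * `|y| + `|x| * `|g t - y|)
    @ F --> (0 : R[i]^o).
  have := cvgD (cvgD (cvgM fx0 gy0) (cvgM fx0 (cvg_cst `|y|))) (cvgM (cvg_cst `|x|) gy0).
  by rewrite !mul0r mulr0 !addr0; apply.
apply/subr_cvg0/cvgr0Pnorm_le => e e0.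
apply: filterS (@cvgr0_norm_le _ _ _ F FF _ bound0 e e0) => t.
rewrite ger0_norm ?addr_ge0 ?mulr_ge0 //; apply: le_trans.
have -> : mul (f t) (g t) - mul x y =
    mul (f t - x) (g t - y) + mul (f t - x) y + mul x (g t - y).
  by rewrite -cmulDr subrK cmulBl cmulBr addrA subrK.
do 2 (apply: le_trans (ler_normD _ _) _; apply: lerD; last exact: norm_cmul_le).
exact: norm_cmul_le.
Qed.

Lemma cvg_cstar {T : Type} {F : set_system T} {FF : Filter F} (f : T -> A) x :
  f @ F --> x -> (fun t => star (f t)) @ F --> star x.
Proof.
move=> /cvgrPdist_lt fx; apply/cvgrPdist_lt => e e0.
by apply: filterS (fx e e0) => t; rewrite -cstarB norm_cstar.
Qed.

Lemma sqr_norm_le_norm_add_sqr p q : star p = p -> star q = q -> mul p q = mul q p ->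
  `|p| ^+ 2 <= `|mul p p + mul q q|.
Proof.
move=> sp sq pq; set z := p + 'i%R *: q.
have sz : star z = p - 'i%R *: q by rewrite cstarD cstarZ conjCi sp sq scaleNr.
have zz : mul (star z) z = mul p p + mul q q.
  rewrite sz cmulDr !cmulBl !cmulZl !cmulZr scalerA -expr2 sqrCi scaleN1r pq.
  by rewrite opprK addrA subrK.
have p_le_z : `|p| <= `|z|.
  rewrite -(@ler_pMn2r _ 2) // -normrMn mulr2n.
  have -> : p + p = z + star z by rewrite sz addrCA addrK.
  by rewrite mulr2n -{2}(norm_cstar z) ler_normD.
by rewrite -zz cstar_identity !expr2 ler_pM.
Qed.

Section SquareRoot.
Variable k : A.
Hypotheses (sk : star k = k) (k_lt1 : `|k| < 1).

Let s := `|mul k k|.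
Let picard w := (2^-1 : R[i]) *: (mul w w + mul k k).
(* The last clause makes any two invariant elements commute. *)
Let invariant w :=
  [/\ `|w| <= s, star w = w & forall z, mul z k = mul k z -> mul z w = mul w z].

Let s_ge0 : 0 <= s. Proof. exact: normr_ge0. Qed.

Let s_lt1 : s < 1.
Proof. by rewrite /s -{1}sk cstar_identity expr2 mulr_ilt1. Qed.

Let half_norm : `|(2^-1 : R[i])| = 2^-1.
Proof. by rewrite ger0_norm // invr_ge0 ler0n. Qed.

Let half_double : (2^-1 : R[i]) * (s + s) = s.
Proof. by field. Qed.

Let picard_invariant w : invariant w -> invariant (picard w).
Proof.
move=> [w_le ws wc]; split.
- rewrite /picard normrZ half_norm -half_double ler_wpM2l ?invr_ge0 ?ler0n //.
  apply: le_trans (ler_normD _ _) _; apply: lerD => //.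
  apply: le_trans (norm_cmul_le _ _) _; apply: le_trans (_ : s * s <= s).
    exact: ler_pM.
  by rewrite ler_piMl // ltW.
- by rewrite /picard cstarZ fmorphV rmorph_nat cstarD !cstar_mul ws sk.
- move=> z zk; rewrite /picard cmulZr cmulZl cmulDr cmulDl.
  by rewrite cmul_comm_mul ?wc // [mul z (mul k k)]cmul_comm_mul.
Qed.

Let picard_lipschitz u v : invariant u -> invariant v ->
  `|picard u - picard v| <= s * `|u - v|.
Proof.
move=> [u_le _ uc] [v_le _ vc].
have uv : mul u v = mul v u by apply: vc; rewrite uc.
have -> : picard u - picard v = (2^-1 : R[i]) *: mul (u - v) (u + v).
  rewrite /picard -scalerBr cmulBl !cmulDr uv; congr (_ *: _).
  by rewrite [mul v u + _]addrC !opprD addrACA subrr addr0 addrACA subrr addr0.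
rewrite normrZ half_norm -half_double -mulrA ler_wpM2l ?invr_ge0 ?ler0n //.
apply: le_trans (norm_cmul_le _ _) _; rewrite [_ * `|u - v|]mulrC ler_wpM2l //.
by apply: le_trans (ler_normD _ _) _; apply: lerD.
Qed.

(* In the unitization, w = 1 - sqrt(1 - k^2), the fixed point of picard. *)
Lemma exists_sqrt_complement :
  exists w, [/\ star w = w, mul w k = mul k w & mul w w + mul k k = w + w].
Proof.
pose y n := iter n picard 0.
have inv0 : invariant 0.
  by split; [rewrite normr0|exact: cstar0|move=> z _; rewrite cmul0l cmul0r].
have inv_y n : invariant (y n) by elim: n => //= n; apply: picard_invariant.
have /cvg_ex[w yw] : cvgn y.
  exact: (cvgn_iter_contraction s_ge0 s_lt1 inv0 picard_invariant picard_lipschitz).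
have lim_eq (f g : nat -> A) (a b : A) : f @ \oo --> a -> g @ \oo --> b -> f =1 g -> a = b.
  by move=> fa gb fg; rewrite -(norm_cvg_lim fa) -(norm_cvg_lim gb) (funext fg).
exists w; split.
- apply: (lim_eq _ _ _ _ (cvg_cstar yw) yw) => n; by case: (inv_y n).
- apply: (lim_eq _ _ _ _ (cvg_cmul yw (cvg_cst k)) (cvg_cmul (cvg_cst k) yw)) => n.
  by case: (inv_y n) => _ _ ->.
- have picard_w : picard w = w.
    apply: (lim_eq (picard \o y) (y \o S)); last by [].
      apply: cvgZ; first exact: cvg_cst.
      by apply: cvgD; [exact: (cvg_cmul yw yw)|exact: cvg_cst].
    by rewrite cvg_shiftS.
  rewrite -{3 4}picard_w /picard -scalerDl.
  have -> : (2^-1 + 2^-1 : R[i]) = 1 by field.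
  by rewrite scale1r.
Qed.

End SquareRoot.

Section StarHomomorphism.
Variable phi : A -> A.
Hypothesis phi_linear : forall k a b, phi (k *: a + b) = k *: phi a + phi b.
Hypothesis phiM : forall a b, phi (mul a b) = mul (phi a) (phi b).
Hypothesis phi_star : forall a, phi (star a) = star (phi a).

Let phi0 : phi 0 = 0.
Proof.
by apply: (addrI (phi 0)); rewrite -{1}(scale1r (phi 0)) -phi_linear scale1r !addr0.
Qed.

Let phiZ k a : phi (k *: a) = k *: phi a.
Proof. by rewrite -[k *: a]addr0 phi_linear phi0 addr0. Qed.

Let phiD a b : phi (a + b) = phi a + phi b.
Proof. by rewrite -[a]scale1r phi_linear !scale1r. Qed.

Lemma norm_star_hom_sa_le1 k : star k = k -> `|k| < 1 -> `|phi k| <= 1.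
Proof.
move=> sk k_lt1; have [w [sw wk ww]] := exists_sqrt_complement sk k_lt1.
set a := phi k; set v := phi w; set x := mul a a.
have sa : star a = a by rewrite /a -phi_star sk.
have sv : star v = v by rewrite /v -phi_star sw.
have va : mul v a = mul a v by rewrite /a /v -!phiM wk.
have vv : mul v v = v + v - x by rewrite /a /v /x -!phiM -phiD -ww phiD addrK.
(* c = a (1 - v) in the unitization, and (1 - v)^2 = 1 - x gives c^2 = x - x^2. *)
set c := a - mul a v.
have sx : star x = x by rewrite /x cstar_mul sa.
have sc : star c = c by rewrite /c cstarB cstar_mul sa sv va.
have xc : mul x c = mul c x.
  rewrite /c cmulBl cmulBr /x -cmulA cmulA; congr (_ - _).
  have h : mul (mul a v) a = mul a (mul a v) by rewrite cmulA va.
  by rewrite (cmul_comm_mul h h) -cmulA cmulA.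
have cc : mul c c = x - mul x x.
  have avav : mul (mul a v) (mul a v) = mul x (mul v v).
    by rewrite cmulA -[mul v (mul a v)]cmulA va !cmulA.
  rewrite /c cmulBl !cmulBr cmulA -/x va -cmulA -/x avav vv cmulBr cmulDr.
  by rewrite opprB [mul x v + _ - _ - _]addrAC addrK addrA subrK.
have := sqr_norm_le_norm_add_sqr sx sc xc.
rewrite cc addrC subrK => x_le.
have x_le1 : `|x| <= 1.
  have [x0|x0] := eqVneq `|x| 0; first by rewrite x0 ler01.
  have xp : 0 < `|x| by rewrite lt_def x0 normr_ge0.
  by rewrite -(ler_pM2r xp) mul1r -expr2.
by rewrite -(expr_le1 (_ : 0 < 2)%N) ?normr_ge0 // -cstar_identity sa.
Qed.

Lemma norm_star_hom_sa_le h : star h = h -> `|phi h| <= `|h|.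
Proof.
move=> sh; apply/ler_addgt0Pr => e e0; set t := `|h| + e.
have t0 : 0 < t by rewrite ltr_wpDl.
have sk : star (t^-1 *: h) = t^-1 *: h.
  by rewrite cstarZ sh fmorphV; congr (_^-1 *: _); exact: conj_Creal (gtr0_real t0).
have k_lt1 : `|t^-1 *: h| < 1.
  by rewrite normrZ gtr0_norm ?invr_gt0 // ltr_pdivrMl // mulr1 ltrDl.
have := norm_star_hom_sa_le1 sk k_lt1.
by rewrite phiZ normrZ gtr0_norm ?invr_gt0 // ler_pdivrMl // mulr1.
Qed.

Lemma norm_star_hom_le a : `|phi a| <= `|a|.
Proof.
have sa : star (mul (star a) a) = mul (star a) a by rewrite cstar_mul cstarK.
have := norm_star_hom_sa_le sa.
by rewrite phiM phi_star !cstar_identity ler_sqr ?nnegrE.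
Qed.

End StarHomomorphism.

End CstarAlgebra.

Section Cocycle.
Variables (G : Type) (gmul : G -> G -> G) (gone : G) (ginv : G -> G).
Variables (A : Type) (mul : A -> A -> A) (alpha : G -> A -> A).
Hypothesis mul1g : forall r, gmul gone r = r.
Hypothesis mulVg : forall r, gmul (ginv r) r = gone.
Hypothesis mulgV : forall r, gmul r (ginv r) = gone.
Hypothesis alpha1 : forall a, alpha gone a = a.
Hypothesis alphaM : forall r s a, alpha (gmul r s) a = alpha r (alpha s a).

Lemma cocycle_one_right c : is_cocycle gmul ginv alpha (mult_invertible mul) c ->
  (c gone).2 =1 id.
Proof.
move=> [c_inv c_cocycle] z.
have ginv1 : ginv gone = gone by rewrite -[ginv gone]mul1g mulgV.
have := (c_cocycle gone gone).2 z; rewrite mul1g /alpha_mult /= ginv1 !alpha1 => cc.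
case: (c_inv gone) => _ [n [_ [[_ nK] _]]].
have {}nK w : n.2 ((c gone).2 w) = w := nK w.
by rewrite -[LHS]nK -cc nK.
Qed.

Lemma cocycle_right_alpha c cinv (X : multiplier A -> Prop) :
  is_cocycle gmul ginv alpha X c -> (c gone).2 =1 id ->
  (forall r, mult_inverse mul (c r) (cinv r)) ->
  forall r z, (c r).2 (alpha r z) = alpha r ((cinv (ginv r)).2 z).
Proof.
move=> [_ c_cocycle] c1 cinvP r z.
have alphaK s a : alpha (ginv s) (alpha s a) = a by rewrite -alphaM mulVg alpha1.
have alphaKV s a : alpha s (alpha (ginv s) a) = a by rewrite -alphaM mulgV alpha1.
have := (c_cocycle r (ginv r)).2 (alpha r z); set u := (c r).2 (alpha r z).
rewrite mulgV c1 /alpha_mult /= => /(congr1 (alpha (ginv r))); rewrite !alphaK => ->.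
case: (cinvP (ginv r)) => _ [[_ cinvK] _].
have {}cinvK w : (cinv (ginv r)).2 ((c (ginv r)).2 w) = w := cinvK w.
by rewrite cinvK alphaKV.
Qed.

End Cocycle.

Lemma continuous_apply_contractive (K : numFieldType) (V : normedModType K)
    (T : topologicalType) (act : T -> V -> V) (x : T -> V) :
  (forall r u, `|act r u| <= `|u|) ->
  (forall r k u v, act r (k *: u + v) = k *: act r u + act r v) ->
  (forall u, continuous (fun r => act r u)) -> continuous x ->
  continuous (fun r => act r (x r)).
Proof.
move=> act_le act_linear act_cont x_cont r0; apply/cvgrPdist_lt => e e0.
have actB r u v : act r (u - v) = act r u - act r v.
  by rewrite addrC -scaleN1r act_linear scaleN1r addrC.
have e2 : 0 < e / 2 by rewrite divr_gt0.
near=> r.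
have -> : act r0 (x r0) - act r (x r) = (act r0 (x r0) - act r (x r0)) + act r (x r0 - x r).
  by rewrite actB addrA subrK.
apply: le_lt_trans (ler_normD _ _) _; rewrite [e]splitr; apply: ltrD.
  by near: r; apply: (cvgrPdist_lt _ _).1 (act_cont (x r0) r0) _ e2.
apply: le_lt_trans (act_le _ _) _.
by near: r; apply: (cvgrPdist_lt _ _).1 (x_cont r0) _ e2.
Unshelve. all: by end_near.
Qed.

Section DynamicalSystem.
Variables (R : realType) (G : topologicalType).
Variables (gmul : G -> G -> G) (gone : G) (ginv : G -> G).
Variables (A : completeNormedModType R[i]) (mul : A -> A -> A) (star : A -> A).
Variable alpha : G -> A -> A.
Hypothesis Hsys : is_Cstar_dynamical_system gmul gone ginv mul star alpha.

Let HA : is_Cstar_algebra mul star.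
Proof. by case: Hsys => _ []. Qed.

Let alpha_continuous a : continuous (fun r => alpha r a).
Proof. by case: Hsys => _ [_ [_ [_ [_]]]]. Qed.

Lemma twist_strictly_continuous (c : G -> multiplier A) a :
  strictly_continuous c ->
  (forall b, continuous (fun r => (c r).2 (mul b (alpha r a)))) ->
  strictly_continuous (fun r => mult_mul (mult_of mul (alpha r a)) (c r)).
Proof.
move=> c_cont right_cont b; split; last exact: right_cont.
move=> r; rewrite /mult_mul /mult_of /=.
apply: (cvg_cmul HA); [exact: alpha_continuous | exact: (c_cont b).1].
Qed.

Lemma cocycle_twist_right_continuous (c cinv : G -> multiplier A) a b :
  is_cocycle gmul ginv alpha (mult_invertible mul) c ->
  (forall r, mult_inverse mul (c r) (cinv r)) -> strictly_continuous cinv ->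
  continuous (fun r => (c r).2 (mul b (alpha r a))).
Proof.
case: Hsys => [[_ [g1 [gV [_ [ginv_cont _]]]]] [_ [alpha_aut [alphaM [alpha1 _]]]]].
move=> c_cocycle cinvP cinv_cont.
have c1 := cocycle_one_right (fun r => (g1 r).1) (fun r => (gV r).2) alpha1 c_cocycle.
have c_alpha := cocycle_right_alpha (fun r => (gV r).1) (fun r => (gV r).2)
  alpha1 alphaM c_cocycle c1 cinvP.
have -> : (fun r => (c r).2 (mul b (alpha r a))) =
    (fun r => mul b (alpha r ((cinv (ginv r)).2 a))).
  by apply/funext => r; rewrite (mult_right_mul HA _ _ (c_cocycle.1 r).1) c_alpha.
have x_cont : continuous (fun r => (cinv (ginv r)).2 a).
  by move=> r; apply: continuous_comp (ginv_cont r) ((cinv_cont a).2 (ginv r)).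
have alpha_x_cont : continuous (fun r => alpha r ((cinv (ginv r)).2 a)).
  apply: continuous_apply_contractive alpha_continuous x_cont.
  - by move=> r u; case: (alpha_aut r) => [L [M [S _]]]; exact: (norm_star_hom_le HA L M S u).
  by move=> r; case: (alpha_aut r).
by move=> r; exact: (cvg_cmul HA (cvg_cst b) (alpha_x_cont r)).
Qed.

Lemma central_twist_right_continuous (c : G -> multiplier A) a b :
  (forall r, mult_central mul (c r)) -> strictly_continuous c ->
  continuous (fun r => (c r).2 (mul b (alpha r a))).
Proof.
move=> c_central c_cont.
have -> : (fun r => (c r).2 (mul b (alpha r a))) = (fun r => mul ((c r).2 b) (alpha r a)).
  apply/funext => r; have [_ c_comm] := c_central r.
  by have [_ /(_ b) /= ->] := c_comm _ (mult_of_multiplier HA (alpha r a)).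
by move=> r; apply: (cvg_cmul HA); [exact: (c_cont b).2 | exact: alpha_continuous].
Qed.

End DynamicalSystem.

Unset Implicit Arguments.
Theorem mainTheorem11 (R : realType) (G : topologicalType)
    (gmul : G -> G -> G) (gone : G) (ginv : G -> G)
    (A : completeNormedModType R[i]) (mul : A -> A -> A) (star : A -> A)
    (alpha : G -> A -> A)
    (Hsys : is_Cstar_dynamical_system gmul gone ginv mul star alpha) :
  (* (i) *)
  (forall c : G -> multiplier A,
     is_cocycle gmul ginv alpha (mult_invertible mul) c ->
     strictly_continuous c ->
     (exists cinv : G -> multiplier A,
        (forall r, mult_inverse mul (c r) (cinv r)) /\ strictly_continuous cinv) ->
     forall a : A,
       strictly_continuous (fun r => mult_mul (mult_of mul (alpha r a)) (c r)))
  /\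
  (* (ii) *)
  (forall c : G -> multiplier A,
     is_cocycle gmul ginv alpha
       (fun m => mult_invertible mul m /\ mult_central mul m) c ->
     strictly_continuous c ->
     forall a : A,
       strictly_continuous (fun r => mult_mul (mult_of mul (alpha r a)) (c r))).
Proof.
split.
- move=> c c_cocycle c_cont [cinv [cinvP cinv_cont]] a.
  apply: (twist_strictly_continuous Hsys c_cont) => b.
  exact: (cocycle_twist_right_continuous Hsys c_cocycle cinvP cinv_cont).
- move=> c [c_central _] c_cont a.
  apply: (twist_strictly_continuous Hsys c_cont) => b.
  exact: (central_twist_right_continuous Hsys (fun r => (c_central r).2) c_cont).
Qed.
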